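(* For every $\epsilon>0$ and every real $X>1$, \[\sum_{n\ge1,\ n \text{ square-free}}\ \prod_{p\mid n}\frac{\log X}{p\log p}\ll X^{\epsilon},\] where the product is over the primes dividing $n$ and the implied constant depends only on $\epsilon$. *)

From HB Require Import structures.
From mathcomp Require Import all_boot all_order all_algebra.
From mathcomp Require Import all_classical all_reals all_analysis.
Set Implicit Arguments. Unset Strict Implicit. Unset Printing Implicit Defensive.
Import Order.TTheory GRing.Theory Num.Theory.
Local Open Scope ring_scope.

Definition squarefree (n : nat) : bool :=
  (0 < n)%N && all (fun p => ~~ (p * p %| n)%N) (primes n).

Definition termB1 {R : realType} (X : R) (n : nat) : R :=
  if squarefree n then \prod_(p <- primes n) (ln X / (p%:R * ln (p%:R : R)))
  else 0.

(* Rankin's trick.  A square-free n is determined by its set of prime factors,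
   so the sum is at most the Euler product prod_p (1 + log X / (p log p)).
   For p <= 2^K the factor is at most del^-1 X^del, because log X / (p log p)
   <= log X; for larger p it is at most exp (log X / (p log p)).  Every prime
   in (m, 2m] divides 'C(2m, m) <= 4^m, so there are at most 2m / log_2 m of
   them, and summing over the dyadic blocks (2^k, 2^(k+1)] gives
   sum_(p > 2^K) 1 / (p log p) <= 4 / (K log 2).  Hence the sum is at most
   del^-(2^K + 1) X^((2^K + 1) del + 4 / (K log 2)), and K >= 8 / (eps log 2),
   del = eps / (2 (2^K + 1)) make the exponent at most eps. *)

From HB Require Import structures.
From mathcomp Require Import all_boot all_order all_algebra.
From mathcomp Require Import all_classical all_reals all_analysis.
From mathcomp Require Import zify ring lra.

Set Implicit Arguments.
Unset Strict Implicit.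
Unset Printing Implicit Defensive.

Import Order.TTheory GRing.Theory Num.Theory.

Lemma prime_ndvd_fact p m : prime p -> (m < p)%N -> ~~ (p %| m`!).
Proof.
move=> pp lt_mp; rewrite fact_prod Euclid_dvd_prod // big_nat_cond.
apply: (big_ind (fun b => ~~ b)) => //; first by move=> x y /negbTE -> /negbTE ->.
move=> i /andP[/andP[i_gt0 lt_im] _]; apply/negP => /(dvdn_leq i_gt0); lia.
Qed.

Lemma prod_primes_mid_dvd_bin m :
  (\prod_(m.+1 <= p < (2 * m).+1 | prime p) p %| 'C(2 * m, m))%N.
Proof.
set Q := (\prod_(m.+1 <= p < (2 * m).+1 | prime p) p)%N.
have le_m2m : (m <= 2 * m)%N by lia.
have coQ : coprime Q m`!.
  rewrite /Q big_nat_cond; apply: (big_ind (coprime^~ m`!)); first exact: coprime1n.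
    by move=> x y cx cy; rewrite coprimeMl cx cy.
  by move=> p /andP[/andP[lt_mp _] pp]; rewrite prime_coprime // prime_ndvd_fact.
have binE : ('C(2 * m, m) * m`! = \prod_(m.+1 <= k < (2 * m).+1) k)%N.
  have := bin_fact le_m2m; rewrite (_ : 2 * m - m = m)%N; last by lia.
  rewrite (fact_split le_m2m) mulnCA => /eqP.
  by rewrite eqn_pmul2l ?fact_gt0 // => /eqP.
by rewrite -(Gauss_dvdl _ coQ) binE (bigID prime) dvdn_mulr.
Qed.

Lemma bin_mid_le m : ('C(2 * m, m) <= 4 ^ m)%N.
Proof.
have lt_m2m : (m < (2 * m).+1)%N by lia.
have := expnDn 1 1 (2 * m); rewrite (bigD1 (Ordinal lt_m2m)) //= !exp1n muln1 => e.
by rewrite (_ : 4 = 2 ^ 2)%N // -expnM e muln1 leq_addr.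
Qed.

Lemma count_primes_mid m :
  (m ^ (\sum_(m.+1 <= p < (2 * m).+1 | prime p) 1) <= 4 ^ m)%N.
Proof.
apply: leq_trans (bin_mid_le m); apply: leq_trans (dvdn_leq _ (prod_primes_mid_dvd_bin m)).
  rewrite (big_morph (fun n => m ^ n) (expnD m) (expn0 m)) big_nat_cond.
  rewrite [leqRHS]big_nat_cond; apply: leq_prod => p /andP[/andP[lt_mp _] _].
  by rewrite expn1 ltnW.
by rewrite bin_gt0; lia.
Qed.

Lemma count_primes_dyadic k :
  ((\sum_((2 ^ k).+1 <= p < (2 * 2 ^ k).+1 | prime p) 1) * k <= 2 * 2 ^ k)%N.
Proof.
have := count_primes_mid (2 ^ k).
by rewrite -expnM (_ : 4 = 2 ^ 2)%N // -expnM leq_exp2l // mulnC.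
Qed.

Lemma sum1_bounded_le N B (P : pred nat) : (forall p, P p -> p < B)%N ->
  (\sum_(0 <= p < N | P p) 1 <= B)%N.
Proof.
move=> P_ltB; suff : (\sum_(0 <= p < N | P p) 1 <= minn N B)%N by lia.
elim: N => [|N IH]; first by rewrite big_geq.
rewrite big_mkcond big_nat_recr //= -big_mkcond.
change (\sum_(0 <= p < N | P p) 1 + (if P N then 1 else 0) <= minn N.+1 B)%N.
by case: ifP => [/P_ltB|_]; lia.
Qed.

Lemma logn_squarefree n p : squarefree n -> logn p n = (p \in primes n).
Proof.
move=> /andP[n_gt0 /allP sqf]; case: (boolP (p \in primes n)) => p_n; last first.
  by apply/eqP; rewrite -leqn0 leqNgt logn_gt0 (negbTE p_n).
have pp : prime p by move: p_n; rewrite mem_primes => /andP[].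
have := sqf p p_n; have := logn_gt0 p n; rewrite p_n mulnn (pfactor_dvdn 2 pp n_gt0).
lia.
Qed.

Lemma squarefree_eq_primes m n :
  squarefree m -> squarefree n -> primes m =i primes n -> m = n.
Proof.
move=> sqf_m sqf_n eq_mn; apply: eqn_from_log.
- by case/andP: sqf_m.
- by case/andP: sqf_n.
by move=> p /=; rewrite !logn_squarefree // eq_mn.
Qed.

Lemma mem_primes_leq n p : p \in primes n -> (p <= n)%N.
Proof. by rewrite mem_primes => /and3P[_ n_gt0 /(dvdn_leq n_gt0)]. Qed.

Lemma big_uniq_ord (R : Type) (idx : R) (op : Monoid.com_law idx)
    (s : seq nat) N (F : nat -> R) :
  uniq s -> all (fun i => i < N)%N s ->
  \big[op/idx]_(i <- s) F i = \big[op/idx]_(i < N | val i \in s) F i.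
Proof.
move=> s_uniq s_ltN; rewrite -(big_mkord (fun i => i \in s)) -[RHS]big_filter.
apply: perm_big; apply: uniq_perm => //; first by rewrite filter_uniq ?iota_uniq.
move=> i; rewrite mem_filter mem_index_iota /=.
by case: (boolP (i \in s)) => // /(allP s_ltN).
Qed.

Local Open Scope ring_scope.

Lemma sum_squarefree_le_prod (R : realDomainType) (a : nat -> R) N :
  (forall p, prime p -> 0 <= a p) ->
  \sum_(n < N | squarefree n) \prod_(p <- primes n) a p
    <= \prod_(p < N | prime p) (1 + a p).
Proof.
move=> a_ge0.
pose F (i : 'I_N) := if prime i then a i else 0.
pose H (J : {set 'I_N}) := \prod_(i in J) F i.
pose S (n : 'I_N) := [set i : 'I_N | val i \in primes n].
have primes_ltN (n : 'I_N) : all (fun i => i < N)%N (primes n).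
  by apply/allP => p /mem_primes_leq le_pn; apply: leq_ltn_trans le_pn _.
have prodE : \prod_(p < N | prime p) (1 + a p) = \sum_(J : {set 'I_N}) H J.
  rewrite big_mkcond /= (eq_bigr (fun i => F i + 1)); last first.
    by move=> i _; rewrite /F; case: ifP => _; rewrite ?add0r // addrC.
  rewrite bigA_distr; apply: eq_bigr => J _.
  by rewrite /H [RHS]big_mkcond.
have sumE : \sum_(n < N | squarefree n) \prod_(p <- primes n) a p
    = \sum_(n < N | squarefree n) H (S n).
  apply: eq_bigr => n _; rewrite (big_uniq_ord _ _ (primes_uniq n) (primes_ltN n)).
  apply: eq_big => [i|i]; first by rewrite inE.
  by rewrite /F mem_primes => /andP[->].
have S_inj : {in [pred n : 'I_N | squarefree n] &, injective S}.
  move=> n1 n2 sqf1 sqf2 eqS; apply/val_inj/squarefree_eq_primes => // p.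
  case: (ltnP p N) => [lt_pN | le_Np].
    by have := congr1 (fun J : {set 'I_N} => Ordinal lt_pN \in J) eqS; rewrite /= !inE.
  have notin (n : 'I_N) : p \in primes n = false.
    by apply/negbTE/negP => /mem_primes_leq; have := ltn_ord n; lia.
  by rewrite !notin.
have H_ge0 J : 0 <= H J.
  by apply: prodr_ge0 => i _; rewrite /F; case: ifP => // /a_ge0.
rewrite sumE prodE (eq_bigl (mem [pred n : 'I_N | squarefree n])) // -(big_imset H S_inj) /=.
rewrite [leRHS](bigID (mem (S @: [pred n : 'I_N | squarefree n]))) /=.
by rewrite lerDl sumr_ge0.
Qed.

Section PrimeWeights.
Variable R : realType.
Local Notation invplogp p := (((p%:R : R) * ln (p%:R : R))^-1).

Lemma ln_ge1BV (x : R) : 0 < x -> 1 - x^-1 <= ln x.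
Proof. by move=> x_gt0; have := expR_ge1Dx (- ln x); rewrite expRN lnK ?posrE; lra. Qed.

Lemma plogp_ge1 p : (1 < p)%N -> 1 <= (p%:R : R) * ln p%:R.
Proof.
move=> p_gt1; have p_ge2 : (2 : R) <= p%:R by rewrite (ler_nat R 2 p).
have p_gt0 : (0 : R) < p%:R by lra.
have := ler_wpM2l (ltW p_gt0) (ln_ge1BV p_gt0).
by rewrite mulrBr mulr1 mulfV ?gt_eqF //; lra.
Qed.

Lemma invplogp_ge0 p : 0 <= invplogp p.
Proof.
rewrite invr_ge0; case: p => [|p]; first by rewrite mul0r.
by rewrite mulr_ge0 ?ln_ge0 // (ler_nat R 1).
Qed.

Lemma sum_invplogp_dyadic k : (0 < k)%N ->
  \sum_((2 ^ k).+1 <= p < (2 * 2 ^ k).+1 | prime p) invplogp p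
    <= 4 / ln 2 * (k%:R^-1 - k.+1%:R^-1).
Proof.
move=> k_gt0.
set c := (\sum_((2 ^ k).+1 <= p < (2 * 2 ^ k).+1 | prime p) 1)%N.
have ln2_gt0 : (0 : R) < ln 2 by apply: ln_gt0; lra.
have k_ge1 : (1 : R) <= k%:R by rewrite (ler_nat R 1 k).
have pow_gt0 : (0 : R) < (2 ^ k)%:R by rewrite ltr0n expn_gt0.
pose w0 : R := ((2 ^ k)%:R * (k%:R * ln 2))^-1.
have w0_gt0 : 0 < w0 by rewrite invr_gt0 !mulr_gt0 //; lra.
have w_le p : (2 ^ k < p)%N -> invplogp p <= w0.
  move=> lt_kp; have lt_kpR : (2 ^ k)%:R < (p%:R : R) by rewrite ltr_nat.
  have ln_le : k%:R * ln (2 : R) <= ln (p%:R : R).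
    rewrite mulr_natl -lnXn; last by lra.
    by rewrite ler_ln ?posrE -?natrX ?ler_nat ?ltr0n ?expn_gt0 ?(ltnW lt_kp) //; lia.
  have lnp_gt0 : 0 < ln (p%:R : R).
    by apply: ln_gt0; rewrite (ltr_nat R 1); have := expn_gt0 2 k; lia.
  rewrite lef_pV2 ?posrE ?mulr_gt0 //; try lra.
  by rewrite ler_pM ?mulr_ge0 //; lra.
have sum_le : \sum_((2 ^ k).+1 <= p < (2 * 2 ^ k).+1 | prime p) invplogp p <= c%:R * w0.
  rewrite natr_sum big_distrl /= big_nat_cond [leRHS]big_nat_cond.
  by apply: ler_sum => p /andP[/andP[lt_kp _] _]; rewrite mul1r w_le.
have c_le : (c%:R : R) <= 2 * (2 ^ k)%:R / k%:R.
  rewrite ler_pdivlMr; last by lra.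
  by rewrite -!natrM ler_nat count_primes_dyadic.
apply: (le_trans sum_le); apply: le_trans (ler_wpM2r (ltW w0_gt0) c_le) _.
rewrite /w0 -(natr1 k) -subr_ge0.
set x : R := k%:R in k_ge1 *; set t : R := (2 ^ k)%:R in pow_gt0 *.
set l := ln (2 : R) in ln2_gt0 *.
have x_gt0 : 0 < x by lra.
have -> : 4 / l * (x^-1 - (x + 1)^-1) - 2 * t / x * (t * (x * l))^-1
    = 2 * (x - 1) / (x ^+ 2 * (x + 1) * l).
  by field; rewrite !gt_eqF //; lra.
by rewrite divr_ge0 ?mulr_ge0 //; lra.
Qed.

Lemma sum_invplogp_pow2_range K d : (0 < K)%N ->
  \sum_(0 <= p < (2 ^ (K + d)).+1 | prime p && (2 ^ K < p)%N) invplogp p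
    <= 4 / ln 2 * (K%:R^-1 - (K + d)%:R^-1).
Proof.
move=> K_gt0; elim: d => [|d IH].
  rewrite addn0 subrr mulr0 big_nat_cond big1 // => p.
  by move=> /andP[/andP[_ le_pK] /andP[_ lt_Kp]]; lia.
rewrite addnS expnS (big_cat_nat (n := (2 ^ (K + d)).+1)) //=; last by lia.
have le_pow : (2 ^ K <= 2 ^ (K + d))%N by rewrite leq_pexp2l // leq_addr.
have blockE : \sum_((2 ^ (K + d)).+1 <= p < (2 * 2 ^ (K + d)).+1 | prime p && (2 ^ K < p)%N)
      invplogp p = \sum_((2 ^ (K + d)).+1 <= p < (2 * 2 ^ (K + d)).+1 | prime p) invplogp p.
  rewrite big_nat_cond [RHS]big_nat_cond; apply: eq_bigl => p.
  by case: (prime p) => //=; lia.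
rewrite blockE.
apply: le_trans (lerD IH (sum_invplogp_dyadic _)) _; first by lia.
by rewrite -mulrDr addrA subrK.
Qed.

Lemma sum_invplogp_gt_pow2 K N : (0 < K)%N ->
  \sum_(0 <= p < N | prime p && (2 ^ K < p)%N) invplogp p <= 4 / (ln 2 * K%:R).
Proof.
move=> K_gt0.
have le_N : (N <= (2 ^ (K + N)).+1)%N.
  have := ltn_expl N (ltnSn 1); have : (2 ^ N <= 2 ^ (K + N))%N.
    by rewrite leq_pexp2l // leq_addl.
  lia.
apply: (@le_trans _ _
    (\sum_(0 <= p < (2 ^ (K + N)).+1 | prime p && (2 ^ K < p)%N) invplogp p)).
  rewrite [leRHS](big_cat_nat (n := N)) //= lerDl sumr_ge0 // => p _.
  exact: invplogp_ge0.
apply: le_trans (sum_invplogp_pow2_range N K_gt0) _.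
have ln2_gt0 : (0 : R) < ln 2 by apply: ln_gt0; lra.
rewrite invfM mulrA ler_wpM2l ?divr_ge0 //; try lra.
by rewrite gerBl invr_ge0.
Qed.

Lemma add1_le_expR_lnV (a L del : R) : 0 <= a <= L -> 0 < del <= 1 ->
  1 + a <= expR (ln del^-1 + del * L).
Proof.
move=> /andP[a_ge0 le_aL] /andP[del_gt0 del_le1].
rewrite expRD lnK ?posrE ?invr_gt0 //.
have delV_ge1 : 1 <= del^-1 by rewrite invf_ge1.
apply: le_trans (ler_wpM2l (ltW (lt_le_trans ltr01 delV_ge1)) (expR_ge1Dx (del * L))).
by rewrite mulrDr mulr1 mulrA mulVf ?gt_eqF // mul1r; lra.
Qed.

Lemma invplogp_le1 p : prime p -> invplogp p <= 1.
Proof.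
by move=> /prime_gt1 p_gt1; rewrite invf_le1 ?plogp_ge1 // (lt_le_trans ltr01) ?plogp_ge1.
Qed.

Lemma euler_prod_invplogp_le (L del : R) K N : 0 <= L -> (0 < K)%N -> 0 < del <= 1 ->
  \prod_(0 <= p < N | prime p) (1 + L * invplogp p)
    <= expR ((2 ^ K).+1%:R * (ln del^-1 + del * L) + L * (4 / (ln 2 * K%:R))).
Proof.
move=> L_ge0 K_gt0 del01; set c := ln del^-1 + del * L.
have c_ge0 : 0 <= c.
  case/andP: del01 => del_gt0 del_le1.
  by rewrite addr_ge0 ?mulr_ge0 ?ln_ge0 ?invf_ge1 // ltW.
have Lw_ge0 p : 0 <= L * invplogp p by rewrite mulr_ge0 ?invplogp_ge0.
have factor_le p : prime p ->
    1 + L * invplogp p <= expR (if (p <= 2 ^ K)%N then c else L * invplogp p).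
  move=> pp; case: ifP => _; last exact: expR_ge1Dx.
  by rewrite add1_le_expR_lnV // Lw_ge0 ler_piMr ?invplogp_le1.
apply: (@le_trans _ _ (\prod_(0 <= p < N | prime p)
    expR (if (p <= 2 ^ K)%N then c else L * invplogp p))).
  by apply: ler_prod => p pp; rewrite factor_le ?addr_ge0.
rewrite -expR_sum ler_expR (bigID (fun p => p <= 2 ^ K)%N) /=.
apply: lerD.
  rewrite (eq_bigr (fun=> c)) => [|p /andP[_ ->]//].
  under eq_bigr do rewrite -[c]mul1r.
  rewrite -mulr_suml ler_wpM2r // -[1]/(1%:R) -natr_sum ler_nat.
  by apply: sum1_bounded_le => p /andP[_ le_pK].
rewrite (eq_bigr (fun p => L * invplogp p)) => [|p /andP[_ /negbTE ->]//].
rewrite -mulr_sumr ler_wpM2l // (eq_bigl (fun p => prime p && (2 ^ K < p)%N)).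
  exact: sum_invplogp_gt_pow2.
by move=> p; rewrite ltnNge.
Qed.

Lemma termB1_ge0 (X : R) n : 1 < X -> 0 <= termB1 X n.
Proof.
move=> X_gt1; rewrite /termB1; case: ifP => // _.
by apply: prodr_ge0 => p _; rewrite mulr_ge0 ?invplogp_ge0 ?ln_ge0 ?ltW.
Qed.

Lemma sum_termB1_le (X del : R) K N : 1 < X -> (0 < K)%N -> 0 < del <= 1 ->
  \sum_(1 <= n < N) termB1 X n
    <= expR ((2 ^ K).+1%:R * (ln del^-1 + del * ln X) + ln X * (4 / (ln 2 * K%:R))).
Proof.
move=> X_gt1 K_gt0 del01; have lnX_ge0 : 0 <= ln X by rewrite ln_ge0 ?ltW.
apply: le_trans _ (euler_prod_invplogp_le N lnX_ge0 K_gt0 del01).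
have -> : \sum_(1 <= n < N) termB1 X n = \sum_(0 <= n < N) termB1 X n.
  case: N => [|N]; first by rewrite !big_geq.
  by rewrite [RHS]big_ltn // {2}/termB1 /= add0r.
rewrite !big_mkord.
apply: le_trans _ (@sum_squarefree_le_prod _ (fun p => ln X * invplogp p) N _); last first.
  by move=> p _; rewrite mulr_ge0 ?invplogp_ge0.
by rewrite [leRHS]big_mkcond /=; apply: ler_sum => n _; rewrite /termB1; case: ifP.
Qed.
End PrimeWeights.

Lemma nneseries_le_ub (R : realType) (u : nat -> R) m (c : R) :
  (forall n, 0 <= u n) -> (forall N, \sum_(m <= n < N) u n <= c) ->
  (\sum_(m <= n <oo) (u n)%:E <= c%:E)%E.
Proof.
move=> u_ge0 le_c; apply: lime_le.
  by apply: is_cvg_nneseries => n _ _; rewrite lee_fin.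
by apply: nearW => N; rewrite sumEFin lee_fin.
Qed.

Local Open Scope ereal_scope.

Theorem lemmaB1 (R : realType) (eps : R) (heps : (0 < eps)%R) :
  exists C : R, (0 < C)%R /\
    forall X : R, (1 < X)%R ->
      \sum_(1 <= n <oo) (termB1 X n)%:E <= (C * X `^ eps)%:E.
Proof.
have ln2_gt0 : (0 < ln (2 : R))%R by apply: ln_gt0; lra.
have Kmin_ge0 : (0 <= 8 / (eps * ln 2))%R by rewrite divr_ge0 ?mulr_ge0 //; lra.
(* [K > eps] is only there to make [del <= 1], through [B > K]. *)
have [K K_gt] : exists K : nat, (8 / (eps * ln 2) + eps < K%:R)%R.
  by exists (Num.Def.trunc (8 / (eps * ln 2) + eps)).+1; exact: truncnS_gt.
have K_gt0 : (0 < K)%N by rewrite -(ltr0n R); lra.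
have tail_le : (4 / (ln 2 * K%:R) <= eps / 2)%R.
  rewrite ler_pdivrMr ?mulr_gt0 ?ltr0n //.
  have : (8 < K%:R * (eps * ln 2))%R by rewrite -ltr_pdivrMr ?mulr_gt0 //; lra.
  lra.
have K_lt_B : (K%:R < (2 ^ K).+1%:R :> R)%R by rewrite ltr_nat ltnS ltnW // ltn_expl.
set B : R := (2 ^ K).+1%:R in K_lt_B *; pose del := (eps / (2 * B))%R.
have del01 : (0 < del <= 1)%R by rewrite divr_gt0 ?ler_pdivrMr ?mulr_gt0 //=; lra.
have Bdel : (B * del = eps / 2)%R by rewrite /del; field; lra.
exists (expR (B * ln del^-1)); split=> [|X X_gt1]; first exact: expR_gt0.
apply: nneseries_le_ub => [n|N]; first exact: termB1_ge0.
apply: le_trans (sum_termB1_le N X_gt1 K_gt0 del01) _.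
have lnX_gt0 : (0 < ln X)%R by exact: ln_gt0.
have -> : (X `^ eps = expR (eps * ln X))%R by rewrite mulrC expRM lnK // posrE; lra.
rewrite -expRD ler_expR -/B mulrDr mulrA Bdel.
have := ler_wpM2l (ltW lnX_gt0) tail_le; lra.
Qed.
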